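(* In the variety $\mathbf{P}_3$ of $3$-dimensional complex Poisson algebras: (1) the Zariski closure of $\bigcup_{\alpha\in\mathbb{C}}O(\mathcal{P}_{3,4}^{\alpha})$ contains the orbit closures of $\mathcal{P}_{3,3}$, $\mathcal{P}_{3,2}$ and $\mathcal{P}_{3,1}$; (2) the Zariski closure of $\bigcup_{\alpha\in\mathbb{C}}O(\mathcal{P}_{3,16}^{\alpha})$ contains the orbit closures of $\mathcal{P}_{3,15}$, $\mathcal{P}_{3,13}$, $\mathcal{P}_{3,2}$ and $\mathcal{P}_{3,1}$. Here (basis $e_1,e_2,e_3$, only nonzero products listed up to commutativity/anticommutativity): $\mathcal{P}_{3,1}$: zero; $\mathcal{P}_{3,2}$: $\{e_1,e_2\}=e_3$; $\mathcal{P}_{3,3}$: $\{e_1,e_2\}=e_2,\{e_1,e_3\}=e_2+e_3$; $\mathcal{P}_{3,4}^{\alpha}$: $\{e_1,e_2\}=e_2,\{e_1,e_3\}=\alpha e_3$; $\mathcal{P}_{3,13}$: $e_1\cdot e_1=e_2$; $\mathcal{P}_{3,15}$: $e_1\cdot e_1=e_2,\{e_1,e_3\}=e_2$; $\mathcal{P}_{3,16}^{\alpha}$: $e_1\cdot e_2=e_3,\{e_1,e_2\}=\alpha e_3$.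
   Context: Fix a $3$-dimensional complex vector space $V$; pairs $(\mu,\mu')$ of bilinear maps on $V$ are identified with their structure constants in $\mathbb{C}^{54}$. $\mathbf{P}_3$ is the affine variety of pairs defining Poisson algebras ($\mu$ commutative associative, $\mu'$ Lie, Leibniz identity $\mu'(\mu(x,y),z)=\mu(\mu'(x,z),y)+\mu(x,\mu'(y,z))$). $\mathrm{GL}(V)$ acts by $(g*(\mu,\mu'))(x,y)=(g\mu(g^{-1}x,g^{-1}y),g\mu'(g^{-1}x,g^{-1}y))$, and $O(\mathcal{P})$ denotes the orbit of any structure representing $\mathcal{P}$. Closures are in the Zariski topology. *)

From HB Require Import structures.
From mathcomp Require Import all_boot all_algebra.
From mathcomp Require Import Rstruct complex.
From mathcomp Require Import mpoly.
Set Implicit Arguments. Unset Strict Implicit. Unset Printing Implicit Defensive.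
Import GRing.Theory.
Local Open Scope ring_scope.

Definition C : closedFieldType := complex Rdefinitions.R.

(* A point of C^54: structure constants of a pair (mu, mu') of bilinear maps
   on V = C^3 with basis e_1,e_2,e_3 (indices 0,1,2).
   Coordinate number 27*t + 9*i + 3*j + k is the e_k-coefficient of
   mu(e_i,e_j) if t = 0 and of mu'(e_i,e_j) if t = 1. *)
Definition pt := 'I_54 -> C.

Definition enc (t : 'I_2) (i j k : 'I_3) : 'I_54 :=
  inord (27 * t + 9 * i + 3 * j + k)%N.

Definition sc (x : pt) (t : 'I_2) (i j k : 'I_3) : C := x (enc t i j k).

Definition mk (f : 'I_2 -> 'I_3 -> 'I_3 -> 'I_3 -> C) : pt :=
  fun n => f (inord (n %/ 27)) (inord ((n %% 27) %/ 9))
             (inord ((n %% 9) %/ 3)) (inord (n %% 3)).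

(* The GL(V) action (g*(mu,mu'))(x,y) = (g mu(g^-1 x, g^-1 y), g mu'(g^-1 x, g^-1 y)),
   with g acting on coordinate columns: g e_a = \sum_k g k a e_k. *)
Definition actGL (g : 'M[C]_3) (x : pt) : pt :=
  mk (fun t i j k =>
        \sum_(a < 3) \sum_(b < 3) \sum_(l < 3)
          (invmx g) a i * (invmx g) b j * sc x t a b l * g k l).

Definition orbitGL (x : pt) : pt -> Prop :=
  fun y => exists g : 'M[C]_3, g \in unitmx /\ y = actGL g x.

Definition zclosure (S : pt -> Prop) : pt -> Prop :=
  fun x => forall p : {mpoly C[54]},
      (forall y, S y -> p.@[y] = 0) -> p.@[x] = 0.

Definition subset_pt (A B : pt -> Prop) : Prop := forall x, A x -> B x.

(* The Poisson algebras (0 = e_1, 1 = e_2, 2 = e_3; t = 0 : mu, t = 1 : {,}) *)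
Definition P3_1 : pt := mk (fun _ _ _ _ => 0).

Definition P3_2 : pt := mk (fun t i j k =>
  match nat_of_ord t, nat_of_ord i, nat_of_ord j, nat_of_ord k with
  | 1%N, 0%N, 1%N, 2%N => 1 | 1%N, 1%N, 0%N, 2%N => -1
  | _, _, _, _ => 0 end).

Definition P3_3 : pt := mk (fun t i j k =>
  match nat_of_ord t, nat_of_ord i, nat_of_ord j, nat_of_ord k with
  | 1%N, 0%N, 1%N, 1%N => 1 | 1%N, 1%N, 0%N, 1%N => -1
  | 1%N, 0%N, 2%N, 1%N => 1 | 1%N, 2%N, 0%N, 1%N => -1
  | 1%N, 0%N, 2%N, 2%N => 1 | 1%N, 2%N, 0%N, 2%N => -1
  | _, _, _, _ => 0 end).

Definition P3_4 (alpha : C) : pt := mk (fun t i j k =>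
  match nat_of_ord t, nat_of_ord i, nat_of_ord j, nat_of_ord k with
  | 1%N, 0%N, 1%N, 1%N => 1 | 1%N, 1%N, 0%N, 1%N => -1
  | 1%N, 0%N, 2%N, 2%N => alpha | 1%N, 2%N, 0%N, 2%N => - alpha
  | _, _, _, _ => 0 end).

Definition P3_13 : pt := mk (fun t i j k =>
  match nat_of_ord t, nat_of_ord i, nat_of_ord j, nat_of_ord k with
  | 0%N, 0%N, 0%N, 1%N => 1
  | _, _, _, _ => 0 end).

Definition P3_15 : pt := mk (fun t i j k =>
  match nat_of_ord t, nat_of_ord i, nat_of_ord j, nat_of_ord k with
  | 0%N, 0%N, 0%N, 1%N => 1
  | 1%N, 0%N, 2%N, 1%N => 1 | 1%N, 2%N, 0%N, 1%N => -1
  | _, _, _, _ => 0 end).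

Definition P3_16 (alpha : C) : pt := mk (fun t i j k =>
  match nat_of_ord t, nat_of_ord i, nat_of_ord j, nat_of_ord k with
  | 0%N, 0%N, 1%N, 2%N => 1 | 0%N, 1%N, 0%N, 2%N => 1
  | 1%N, 0%N, 1%N, 2%N => alpha | 1%N, 1%N, 0%N, 2%N => - alpha
  | _, _, _, _ => 0 end).

Definition family_orbits (F : C -> pt) : pt -> Prop :=
  fun y => exists alpha : C, orbitGL (F alpha) y.

(* Each degeneration Q of a family F is realised by a basis E(s) of F(alpha(s)),
   s <> 0, in which the structure constants are Q + s D for a fixed table D.
   A polynomial vanishing on the points Q + s D (s <> 0) vanishes at Q, since a
   univariate polynomial with infinitely many roots is zero; so Q lies in the
   Zariski closure of the family.  That closure is GL(V)-stable because each
   g * _ is a polynomial map, hence it contains the whole orbit closure of Q. *)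

From mathcomp Require Import all_boot all_algebra.
From mathcomp Require Import Rstruct complex.
From mathcomp Require Import mpoly.
From mathcomp Require Import zify ring.
From Stdlib Require Import FunctionalExtensionality.
Set Implicit Arguments. Unset Strict Implicit. Unset Printing Implicit Defensive.
Import GRing.Theory Num.Theory.
Local Open Scope ring_scope.

Definition dt (n : 'I_54) : 'I_2 := inord (n %/ 27).
Definition di (n : 'I_54) : 'I_3 := inord ((n %% 27) %/ 9).
Definition dj (n : 'I_54) : 'I_3 := inord ((n %% 9) %/ 3).
Definition dk (n : 'I_54) : 'I_3 := inord (n %% 3).

Lemma mkE f n : mk f n = f (dt n) (di n) (dj n) (dk n).
Proof. by []. Qed.

Lemma enc_val t i j k : nat_of_ord (enc t i j k) = (27 * t + 9 * i + 3 * j + k)%N.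
Proof.
rewrite /enc inordK //.
by have := ltn_ord t; have := ltn_ord i; have := ltn_ord j; have := ltn_ord k; lia.
Qed.

Ltac solve_digit :=
  apply: val_inj; rewrite /= inordK enc_val;
  have := ltn_ord t; have := ltn_ord i; have := ltn_ord j; have := ltn_ord k; lia.

Lemma dt_enc t i j k : dt (enc t i j k) = t. Proof. solve_digit. Qed.
Lemma di_enc t i j k : di (enc t i j k) = i. Proof. solve_digit. Qed.
Lemma dj_enc t i j k : dj (enc t i j k) = j. Proof. solve_digit. Qed.
Lemma dk_enc t i j k : dk (enc t i j k) = k. Proof. solve_digit. Qed.

Lemma enc_dec n : enc (dt n) (di n) (dj n) (dk n) = n.
Proof.
by apply: val_inj; rewrite /= enc_val /dt /di /dj /dk !inordK; have := ltn_ord n; lia.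
Qed.

Lemma sc_mk f t i j k : sc (mk f) t i j k = f t i j k.
Proof. by rewrite /sc mkE dt_enc di_enc dj_enc dk_enc. Qed.

Lemma pt_ext (x y : pt) : (forall t i j k, sc x t i j k = sc y t i j k) -> x = y.
Proof. by move=> E; apply: functional_extensionality => n; rewrite -(enc_dec n); apply: E. Qed.

Lemma zclosure_minimal A B : subset_pt A (zclosure B) -> subset_pt (zclosure A) (zclosure B).
Proof. by move=> AB x Ax p p0B; apply: Ax => y /AB; apply. Qed.

Lemma poly_eq0_of_nonzero_roots (R : numDomainType) (q : {poly R}) :
  (forall s, s != 0 -> q.[s] = 0) -> q = 0.
Proof.
move=> q_root; apply/eqP; apply: contraT => q_neq0.
pose rs := [seq i.+1%:R : R | i <- iota 0 (size q)].
have rs_roots : all (root q) rs.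
  by apply/allP => _ /mapP [i _ ->]; apply/rootP/q_root; rewrite pnatr_eq0.
have rs_uniq : uniq rs.
  by rewrite map_inj_uniq ?iota_uniq // => i j /eqP; rewrite eqr_nat eqSS => /eqP.
by have := max_poly_roots q_neq0 rs_roots rs_uniq; rewrite size_map size_iota ltnn.
Qed.

Lemma meval_poly_curve (R : comNzRingType) n (p : {mpoly R[n]}) (c : 'I_n -> {poly R}) :
  exists q : {poly R}, forall s, q.[s] = p.@[fun i => (c i).[s]].
Proof.
exists (\sum_(m <- msupp p) p@_m *: \prod_i c i ^+ m i) => s.
rewrite mevalE horner_sum; apply: eq_bigr => m _.
rewrite hornerZ horner_prod; congr (_ * _); apply: eq_bigr => i _.
by rewrite horner_exp.
Qed.

Definition line (x d : pt) (s : C) : pt := fun n => x n + s * d n.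

Lemma sc_line x d s t i j k : sc (line x d s) t i j k = sc x t i j k + s * sc d t i j k.
Proof. by []. Qed.

Lemma zclosure_line B x d : (forall s, s != 0 -> B (line x d s)) -> zclosure B x.
Proof.
move=> lineB p p0B.
have [q qE] := meval_poly_curve p (fun n => (x n)%:P + d n *: 'X).
have q0 : q = 0.
  apply: poly_eq0_of_nonzero_roots => s s0; rewrite qE -[RHS](p0B _ (lineB s s0)).
  by apply: meval_eq => n; rewrite hornerD hornerZ hornerC hornerX mulrC.
have := qE 0; rewrite q0 horner0 => ->.
by apply: meval_eq => n; rewrite hornerD hornerZ hornerC hornerX mulr0 addr0.
Qed.

Lemma meval_actGL g (p : {mpoly C[54]}) :
  exists q : {mpoly C[54]}, forall y, q.@[y] = p.@[actGL g y].
Proof.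
pose L (n : 'I_54) : {mpoly C[54]} :=
  \sum_(a < 3) \sum_(b < 3) \sum_(l < 3)
    ((invmx g) a (di n) * (invmx g) b (dj n) * g (dk n) l) *: 'X_(enc (dt n) a b l).
exists (p \mPo [tuple L n | n < 54]) => y.
rewrite comp_mpoly_meval; apply: meval_eq => n; rewrite tnth_mktuple /L /actGL mkE.
rewrite !raddf_sum; apply: eq_bigr => a _; rewrite !raddf_sum; apply: eq_bigr => b _.
rewrite !raddf_sum; apply: eq_bigr => l _.
by rewrite /= mevalZ mevalXU /sc mulrAC.
Qed.

Lemma zclosure_actGL B g : (forall y, B y -> B (actGL g y)) ->
  forall x, zclosure B x -> zclosure B (actGL g x).
Proof.
move=> gB x Bx p p0B; have [q qE] := meval_actGL g p.
by rewrite -qE; apply: Bx => y By; rewrite qE; apply: p0B; apply: gB.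
Qed.

Lemma actGL_mul g h x : g \in unitmx -> h \in unitmx ->
  actGL g (actGL h x) = actGL (g *m h) x.
Proof.
move=> g_unit h_unit; apply: functional_extensionality => n.
have invM : invmx (g *m h) = invmx h *m invmx g := invrM g_unit h_unit.
rewrite /actGL [LHS]mkE [RHS]mkE invM.
under eq_bigr do under eq_bigr do under eq_bigr do rewrite sc_mk.
have sum3 (F : 'I_3 -> 'I_3 -> 'I_3 -> C) :
    \sum_a \sum_b \sum_l F a b l = \sum_(p : 'I_3 * 'I_3 * 'I_3) F p.1.1 p.1.2 p.2.
  by rewrite pair_bigA pair_bigA.
rewrite [RHS]sum3.
under eq_bigr => a _ do under eq_bigr => b _ do under eq_bigr => l _ do
  rewrite sum3 mulr_sumr mulr_suml.
under eq_bigr => a _ do under eq_bigr => b _ do rewrite exchange_big.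
under eq_bigr => a _ do rewrite exchange_big.
rewrite exchange_big; apply: eq_bigr => q _.
rewrite !mxE !big_ord_recr !big_ord0 /=.
ring.
Qed.

(* Column [a] of [h] is the image of [e_a]. *)
Definition alg_morphism (h : 'M[C]_3) (x y : pt) : Prop :=
  forall t a b k, \sum_l sc x t a b l * h k l = \sum_i \sum_j h i a * h j b * sc y t i j k.

Lemma alg_morphism_actGL h x y : h \in unitmx -> alg_morphism h x y ->
  x = actGL (invmx h) y.
Proof.
move=> h_unit hxy; apply: pt_ext => t i j k.
rewrite /actGL sc_mk invmxK.
under eq_bigr => a _ do rewrite exchange_big.
rewrite exchange_big.
under eq_bigr => l _ do
  (under eq_bigr => a _ do rewrite -mulr_suml; rewrite -mulr_suml -hxy mulr_suml).
rewrite exchange_big /=.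
under eq_bigr => m _ do (under eq_bigr => l _ do rewrite -mulrA; rewrite -mulr_sumr).
have hVh m : \sum_l h l m * invmx h k l = (k == m)%:R.
  have /matrixP/(_ k m) := mulVmx h_unit; rewrite !mxE => <-.
  by apply: eq_bigr => l _; rewrite mulrC.
under eq_bigr => m _ do rewrite hVh.
rewrite (bigD1 k) //= eqxx mulr1 big1 ?addr0 // => m /negPf.
by rewrite eq_sym => ->; rewrite mulr0.
Qed.

Lemma family_orbits_actGL F g y : g \in unitmx ->
  family_orbits F y -> family_orbits F (actGL g y).
Proof.
move=> g_unit [al [h [h_unit ->]]]; exists al, (g *m h).
by rewrite unitmx_mul g_unit h_unit actGL_mul.
Qed.

Lemma zclosure_orbit_sub F Q : zclosure (family_orbits F) Q ->
  subset_pt (zclosure (orbitGL Q)) (zclosure (family_orbits F)).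
Proof.
move=> QF; apply: zclosure_minimal => _ [g [g_unit ->]].
by apply: zclosure_actGL QF => y; apply: family_orbits_actGL.
Qed.

Lemma zclosure_family_line F x d (al : C -> C) (h : C -> 'M[C]_3) :
  (forall s, s != 0 -> h s \in unitmx /\ alg_morphism (h s) (line x d s) (F (al s))) ->
  zclosure (family_orbits F) x.
Proof.
move=> hF; apply: zclosure_line => s /hF [h_unit hxF].
exists (al s), (invmx (h s)); split; first by rewrite unitmx_inv.
exact: alg_morphism_actGL.
Qed.

Lemma alg_morphism_scalar s x : alg_morphism s%:M (line P3_1 x s) x.
Proof.
move=> t a b k.
rewrite [LHS](bigD1 k) // [in LHS]big1 => [|l /negPf kl]; last first.
  by rewrite mxE eq_sym kl mulr0.
rewrite [RHS](bigD1 a) // [X in _ = _ + X]big1 => [|i /negPf ia]; last first.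
  by rewrite big1 // => j _; rewrite mxE ia !mul0r.
rewrite (bigD1 b) // big1 => [|j /negPf jb]; last first.
  by rewrite !mxE jb mulr0 mul0r.
by rewrite /= sc_line sc_mk add0r !mxE !eqxx /=; ring.
Qed.

Lemma P3_1_in_zclosure_family F : zclosure (family_orbits F) P3_1.
Proof.
apply: (@zclosure_family_line F P3_1 (F 0) (fun=> 0) (fun s => s%:M)) => s s0.
by rewrite unitmxE det_scalar unitfE expf_neq0 //; split=> //; apply: alg_morphism_scalar.
Qed.

Definition mx3 (f : nat -> nat -> C) : 'M[C]_3 := \matrix_(i < 3, j < 3) f i j.

Lemma det_mx33 (R : comPzRingType) (f : nat -> nat -> R) :
  \det (\matrix_(i < 3, j < 3) f i j) =
    f 0%N 0%N * (f 1%N 1%N * f 2%N 2%N - f 1%N 2%N * f 2%N 1%N)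
  - f 0%N 1%N * (f 1%N 0%N * f 2%N 2%N - f 1%N 2%N * f 2%N 0%N)
  + f 0%N 2%N * (f 1%N 0%N * f 2%N 1%N - f 1%N 1%N * f 2%N 0%N).
Proof.
rewrite (expand_det_row _ 0) !big_ord_recl big_ord0 /cofactor.
by rewrite !(expand_det_row _ 0) !big_ord_recl !big_ord0 /cofactor !det_mx11 !mxE /=; ring.
Qed.

Definition o0 : 'I_3 := @Ordinal 3 0 isT.
Definition o1 : 'I_3 := @Ordinal 3 1 isT.
Definition o2 : 'I_3 := @Ordinal 3 2 isT.
Definition t0 : 'I_2 := @Ordinal 2 0 isT.
Definition t1 : 'I_2 := @Ordinal 2 1 isT.

Lemma sum_ord3 (f : 'I_3 -> C) : \sum_i f i = f o0 + f o1 + f o2.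
Proof.
by rewrite !big_ord_recl big_ord0 addr0 addrA; congr (f _ + f _ + f _); apply: val_inj.
Qed.

Lemma ord3P (i : 'I_3) : [\/ i = o0, i = o1 | i = o2].
Proof.
by case: i => [[|[|[|m]]] lt_i3] //; [constructor 1|constructor 2|constructor 3]; apply: val_inj.
Qed.

Lemma ord2P (t : 'I_2) : t = t0 \/ t = t1.
Proof. by case: t => [[|[|m]] lt_t2] //; [left|right]; apply: val_inj. Qed.

Ltac check_alg_morphism :=
  let t := fresh "t" in let a := fresh "a" in let b := fresh "b" in let k := fresh "k" in
  move=> t a b k; rewrite !sum_ord3 !sc_line !sc_mk /mx3 !mxE;
  case: (ord2P t) => ->; case: (ord3P a) => ->; case: (ord3P b) => ->;
  case: (ord3P k) => ->; cbn [nat_of_ord o0 o1 o2 t0 t1]; first [ring | by field].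

(* Named after their only product in the 1-based basis: {e_1,e_3} = e_3,
   e_1 e_3 = e_2 and e_1 e_2 = e_3. *)
Definition br13_3 : pt := mk (fun t i j k =>
  match nat_of_ord t, nat_of_ord i, nat_of_ord j, nat_of_ord k with
  | 1%N, 0%N, 2%N, 2%N => 1 | 1%N, 2%N, 0%N, 2%N => -1
  | _, _, _, _ => 0 end).

Definition dot13_2 : pt := mk (fun t i j k =>
  match nat_of_ord t, nat_of_ord i, nat_of_ord j, nat_of_ord k with
  | 0%N, 0%N, 2%N, 1%N => 1 | 0%N, 2%N, 0%N, 1%N => 1
  | _, _, _, _ => 0 end).

Definition dot12_3 : pt := mk (fun t i j k =>
  match nat_of_ord t, nat_of_ord i, nat_of_ord j, nat_of_ord k with
  | 0%N, 0%N, 1%N, 2%N => 1 | 0%N, 1%N, 0%N, 2%N => 1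
  | _, _, _, _ => 0 end).

Lemma P3_3_in_zclosure_P3_4 : zclosure (family_orbits P3_4) P3_3.
Proof.
pose h s := mx3 (fun i j => match i, j with
  | 0%N, 0%N => 1 | 1%N, 1%N => - s | 1%N, 2%N => 1 | 2%N, 2%N => s | _, _ => 0 end).
apply: (@zclosure_family_line _ _ br13_3 (fun s => 1 + s) h) => s s0; split.
  have det_h : \det (h s) = - s ^+ 2 by rewrite det_mx33 /=; ring.
  by rewrite unitmxE unitfE det_h oppr_eq0 expf_neq0.
check_alg_morphism.
Qed.

Lemma P3_2_in_zclosure_P3_4 : zclosure (family_orbits P3_4) P3_2.
Proof.
pose h s := mx3 (fun i j => match i, j with
  | 0%N, 0%N => s | 1%N, 1%N => 1 | 1%N, 2%N => s | 2%N, 1%N => 1 | _, _ => 0 end).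
apply: (@zclosure_family_line _ _ br13_3 (fun=> 0) h) => s s0; split.
  have det_h : \det (h s) = - s ^+ 2 by rewrite det_mx33 /=; ring.
  by rewrite unitmxE unitfE det_h oppr_eq0 expf_neq0.
check_alg_morphism.
Qed.

Definition P3_16_basis (s : C) : 'M[C]_3 := mx3 (fun i j => match i, j with
  | 0%N, 0%N => 1 | 0%N, 2%N => 2 * s | 1%N, 0%N => 1 | 2%N, 1%N => 2 | _, _ => 0 end).

Lemma P3_16_basis_unit s : s != 0 -> P3_16_basis s \in unitmx.
Proof.
move=> s0; have det_h : \det (P3_16_basis s) = 4 * s by rewrite det_mx33 /=; ring.
by rewrite unitmxE unitfE det_h mulf_neq0 ?pnatr_eq0.
Qed.

Lemma P3_15_in_zclosure_P3_16 : zclosure (family_orbits P3_16) P3_15.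
Proof.
apply: (@zclosure_family_line _ _ dot13_2 (fun s => - s^-1) P3_16_basis) => s s0.
by split; [apply: P3_16_basis_unit | check_alg_morphism].
Qed.

Lemma P3_13_in_zclosure_P3_16 : zclosure (family_orbits P3_16) P3_13.
Proof.
apply: (@zclosure_family_line _ _ dot13_2 (fun=> 0) P3_16_basis) => s s0.
by split; [apply: P3_16_basis_unit | check_alg_morphism].
Qed.

Lemma P3_2_in_zclosure_P3_16 : zclosure (family_orbits P3_16) P3_2.
Proof.
pose h s := mx3 (fun i j => match i, j with
  | 0%N, 0%N => s | 1%N, 1%N => 1 | 2%N, 2%N => 1 | _, _ => 0 end).
apply: (@zclosure_family_line _ _ dot12_3 (fun s => s^-1) h) => s s0; split.
  have det_h : \det (h s) = s by rewrite det_mx33 /=; ring.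
  by rewrite unitmxE unitfE det_h.
check_alg_morphism.
Qed.

Theorem lemma4p9 :
  (subset_pt (zclosure (orbitGL P3_3)) (zclosure (family_orbits P3_4)) /\
   subset_pt (zclosure (orbitGL P3_2)) (zclosure (family_orbits P3_4)) /\
   subset_pt (zclosure (orbitGL P3_1)) (zclosure (family_orbits P3_4))) /\
  (subset_pt (zclosure (orbitGL P3_15)) (zclosure (family_orbits P3_16)) /\
   subset_pt (zclosure (orbitGL P3_13)) (zclosure (family_orbits P3_16)) /\
   subset_pt (zclosure (orbitGL P3_2)) (zclosure (family_orbits P3_16)) /\
   subset_pt (zclosure (orbitGL P3_1)) (zclosure (family_orbits P3_16))).
Proof.
split; [split; [|split] | split; [|split; [|split]]]; apply: zclosure_orbit_sub.
- exact: P3_3_in_zclosure_P3_4.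
- exact: P3_2_in_zclosure_P3_4.
- exact: P3_1_in_zclosure_family.
- exact: P3_15_in_zclosure_P3_16.
- exact: P3_13_in_zclosure_P3_16.
- exact: P3_2_in_zclosure_P3_16.
- exact: P3_1_in_zclosure_family.
Qed.
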